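(* Let $G$ be a persistent graph with vertex order $<$, let $k\ge 4$, and let $p_1,\dots,p_k\in V(G)$ form an induced cycle in this order (edges $\{p_i,p_{i+1}\}$ and $\{p_k,p_1\}$). Then, after possibly cyclically shifting the indices and/or reversing the cyclic order of the indices, $p_1>p_3>p_4>\dots>p_k>p_2$.
   Context: A persistent graph is a graph $G$ together with a linear order $v_1<v_2<\dots<v_n$ on $V(G)$ such that (1) $\{v_i,v_{i+1}\}\in E(G)$ for all $i$ (a Hamiltonian path following the order); (2) X-property: for all $p<q<r<s$, if $\{p,r\}\in E(G)$ and $\{q,s\}\in E(G)$ then $\{p,s\}\in E(G)$; (3) bar-property: if $\{p,q\}\in E(G)$ and $p,q$ are not consecutive in the order, then there is a vertex $r$ with $p<r<q$ adjacent to both $p$ and $q$. *)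

From mathcomp Require Import all_boot.
Set Implicit Arguments. Unset Strict Implicit. Unset Printing Implicit Defensive.

(* A simple graph on vertex set 'I_n (= {0,...,n-1}); the linear vertex order
   v_1 < ... < v_n is the natural order of the ordinals. *)
Definition simple_graph (n : nat) (e : rel 'I_n) : Prop :=
  (forall u v, e u v = e v u) /\ (forall u, ~~ e u u).

Definition persistent (n : nat) (e : rel 'I_n) : Prop :=
  simple_graph e /\
  (forall u v : 'I_n, val v = (val u).+1 -> e u v) /\
  (forall p q r s : 'I_n, p < q -> q < r -> r < s -> e p r -> e q s -> e p s) /\
  (* (3) bar-property (edges written with p < q; e is symmetric) *)
  (forall p q : 'I_n, p < q -> e p q -> (val p).+1 != val q ->
     exists r : 'I_n, [/\ p < r, r < q, e p r & e r q]).

Definition cyc_adj (k i j : nat) : bool :=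
  (j == i.+1 %% k) || (i == j.+1 %% k).

Definition induced_cycle (n : nat) (e : rel 'I_n) (k : nat) (p : nat -> 'I_n) : Prop :=
  (forall i j, i < k -> j < k -> p i = p j -> i = j) /\
  (forall i j, i < k -> j < k -> e (p i) (p j) = cyc_adj k i j).

Definition cyc_index (k s : nat) (rev : bool) (i : nat) : nat :=
  if rev then (s + k - i) %% k else (s + i) %% k.

From mathcomp Require Import all_boot zify.

(* Rotate and orient the cycle so that c 0 is its largest vertex and c 1 < c k.-1.
   The X-property then makes c 1 the smallest vertex and forbids edges of the
   path c 2, ..., c k.-1 from jumping over its endpoints; such an induced path is
   monotone, because the X-property would push any edge jumping over an inner
   vertex back to an endpoint. It cannot increase: otherwise c 1, ..., c k.-1, c 0
   is an increasing induced cycle d 0 < ... < d k.-1, and repeatedly splitting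
   the edge d 0 d k.-1 by the bar-property would give an infinite descent of
   edges from [d 0, d 1) to (d k.-2, d k.-1], since a splitting vertex between
   d 1 and d k.-2 would give a chord by the X-property. *)

Set Implicit Arguments.
Unset Strict Implicit.
Unset Printing Implicit Defensive.

Lemma nat_ivt (f : nat -> nat) v a b :
  a <= b -> f a <= v < f b -> exists2 j, a <= j < b & f j <= v < f j.+1.
Proof.
move=> + /andP[fa vb]; elim: b vb => [|b IH] vb ab.
  by move: ab fa vb; rewrite leqn0 => /eqP ->; lia.
have [ab1|ab1] := eqVneq a b.+1; first by move: fa vb; rewrite ab1; lia.
have [fbv|vfb] := leqP (f b) v; first by exists b; lia.
by have [j ajb fj] := IH vfb ltac:(lia); exists j => //; lia.
Qed.

Lemma modn_lt_double x k : x < k.*2 -> x %% k = if x < k then x else x - k.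
Proof.
move=> xk; case: ltnP => [/modn_small //|kx].
by rewrite -{1}(subnK kx) modnDr modn_small; lia.
Qed.

Lemma cyc_adjE k i j : i < k -> j < k -> cyc_adj k i j =
  [|| j == i.+1, i == j.+1, (i == 0) && (j == k.-1) | (j == 0) && (i == k.-1)].
Proof.
by move=> ik jk; rewrite /cyc_adj !modn_lt_double; try lia; do 2 case: ifP; lia.
Qed.

Lemma cyc_indexE k s rev i : s < k -> i < k -> cyc_index k s rev i =
  if rev then (if s + k - i < k then s + k - i else s + k - i - k)
  else (if s + i < k then s + i else s + i - k).
Proof. by move=> sk ik; rewrite /cyc_index; case: rev; rewrite modn_lt_double //; lia. Qed.

Lemma cyc_index_lt k s rev i : 0 < k -> cyc_index k s rev i < k.
Proof. by move=> k0; rewrite /cyc_index; case: rev; rewrite ltn_pmod. Qed.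

Lemma cyc_index_inj k s rev i j : s < k -> i < k -> j < k ->
  cyc_index k s rev i = cyc_index k s rev j -> i = j.
Proof. by move=> sk ik jk; rewrite !cyc_indexE //; case: rev; do 2 case: ifP; lia. Qed.

Lemma cyc_adj_index k s rev i j : s < k -> i < k -> j < k ->
  cyc_adj k (cyc_index k s rev i) (cyc_index k s rev j) = cyc_adj k i j.
Proof.
move=> sk ik jk; have k0 : 0 < k by lia.
by rewrite !cyc_adjE ?cyc_index_lt // !cyc_indexE //; case: rev; do 2 case: ifP; lia.
Qed.

Lemma cyc_index0 k s rev : s < k -> cyc_index k s rev 0 = s.
Proof. by move=> sk; rewrite /cyc_index subn0 addn0 modnDr modn_small; case: rev. Qed.

Lemma cyc_index_rev k s i : s < k -> 0 < i < k ->
  cyc_index k s true i = cyc_index k s false (k - i).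
Proof. by move=> sk /andP[i0 ik]; rewrite !cyc_indexE //; try lia; do 2 case: ifP; lia. Qed.

Lemma induced_cycle_reindex n (e : rel 'I_n) k (p : nat -> 'I_n) s rev :
  s < k -> induced_cycle e k p -> induced_cycle e k (fun i => p (cyc_index k s rev i)).
Proof.
move=> sk [p_inj p_adj]; have k0 : 0 < k by lia.
split=> i j ik jk; last by rewrite p_adj ?cyc_index_lt ?cyc_adj_index.
by move/p_inj; rewrite !cyc_index_lt // => /(_ isT isT); apply: cyc_index_inj.
Qed.

Definition unstraddled_path n (e : rel 'I_n) m (x : nat -> 'I_n) : Prop :=
  [/\ forall j, j < m -> e (x j) (x j.+1),
      forall a b, a <= m -> b <= m -> x a = x b -> a = b,
      forall a b, a.+1 < b <= m -> ~~ e (x a) (x b),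
      forall a b, 0 < a <= m -> 0 < b <= m -> e (x a) (x b) -> ~ (x a < x 0 < x b)
    & forall a b, a < m -> b < m -> e (x a) (x b) -> ~ (x a < x m < x b)].

Section PersistentGraph.

Variables (n : nat) (e : rel 'I_n).
Hypothesis e_sym : symmetric e.
Hypothesis e_X : forall p q r s : 'I_n, p < q -> q < r -> r < s -> e p r -> e q s -> e p s.
Hypothesis e_bar : forall p q : 'I_n, p < q -> e p q -> (val p).+1 != val q ->
  exists r : 'I_n, [/\ p < r, r < q, e p r & e r q].

Section UnstraddledPath.

Variables (m : nat) (x : nat -> 'I_n).
Hypothesis x_path : unstraddled_path e m x.

Lemma path_ltE a b : a <= m -> b <= m -> a != b -> (x a < x b) = (x a <= x b).
Proof.
move=> am bm ab; rewrite ltn_neqAle andb_idl // => _.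
by case: x_path => _ x_inj _ _ _; apply: contra_neq ab => /val_inj; apply: x_inj.
Qed.

Lemma increasing_prefix_unstraddled i : (forall j, j < i -> x j < x j.+1) ->
  forall a b, i < a <= m -> i < b <= m -> e (x a) (x b) -> ~ (x a < x i < x b).
Proof.
case: x_path => x_edge _ x_chordless x_head _.
elim: i => [_|i IH incr] a b ia ib eab; first exact: x_head.
case/andP=> ai ib'; have [xia|xai] := ltnP (x i) (x a).
  have /negP[] := @x_chordless i b ltac:(lia).
  exact: e_X xia ai ib' (@x_edge i ltac:(lia)) eab.
rewrite -path_ltE in xai; [|lia..].
have xii := incr i (ltnSn i).
by apply: (IH _ a b) => //; try lia; move=> j ji; apply: incr; lia.
Qed.

Lemma unstraddled_path_increasing : x 0 < x m -> forall j, j < m -> x j < x j.+1.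
Proof.
case: x_path => x_edge _ _ _ x_last x0m.
suff incr i : i <= m -> forall j, j < i -> x j < x j.+1 by apply: incr.
elim: i => [//|i IH] im; have incr := IH (ltnW im).
suff xi : x i < x i.+1 by move=> j; rewrite ltnS leq_eqVlt => /predU1P[->|/incr].
have xim : x i < x m.
  rewrite (@path_ltE i m); [rewrite leqNgt; apply/negP => xmi|lia..].
  have [j ji /andP[xj xj']] :=
    @nat_ivt (fun j => nat_of_ord (x j)) (x m) 0 i (leq0n i) ltac:(cbv beta; lia).
  rewrite -(@path_ltE j m) in xj; [|lia..].
  by apply: (@x_last j j.+1); rewrite ?x_edge //; lia.
rewrite (@path_ltE i i.+1); [rewrite leqNgt; apply/negP => xii|lia..].
have [j ij /andP[xj xj']] :=
  @nat_ivt (fun j => nat_of_ord (x j)) (x i) i.+1 m im ltac:(cbv beta; lia).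
rewrite -(@path_ltE j i) in xj; [|lia..].
by apply: (@increasing_prefix_unstraddled i incr j j.+1); rewrite ?x_edge //; lia.
Qed.

Lemma unstraddled_path_rev : unstraddled_path e m (fun j => x (m - j)).
Proof.
case: x_path => x_edge x_inj x_chordless x_head x_last.
split=> [j jm|a b am bm|a b ab|a b|a b].
- by rewrite e_sym -(subnSK jm) x_edge //; lia.
- by move/x_inj; lia.
- by rewrite e_sym x_chordless //; lia.
- by rewrite subn0 => a_mid b_mid; apply: x_last; lia.
- by rewrite subnn => am bm; apply: x_head; lia.
Qed.

End UnstraddledPath.

Lemma unstraddled_path_monotone m (x : nat -> 'I_n) : unstraddled_path e m x ->
  (forall j, j < m -> x j < x j.+1) \/ (forall j, j < m -> x j.+1 < x j).
Proof.
move=> x_path; have [-> | m_gt0] := posnP m; first by left.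
have [x0m|xm0] := ltnP (x 0) (x m); first by left; apply: unstraddled_path_increasing.
rewrite -(path_ltE x_path) in xm0; [right|lia..].
move=> j jm; have /= := unstraddled_path_increasing (unstraddled_path_rev x_path).
rewrite subn0 subnn => /(_ xm0 (m - j.+1)).
have -> : m - (m - j.+1) = j.+1 by lia.
have -> : m - (m - j.+1).+1 = j by lia.
by apply; lia.
Qed.

Section InducedCycle.

Variables (k : nat) (c : nat -> 'I_n).
Hypothesis k_ge4 : 4 <= k.
Hypothesis c_cycle : induced_cycle e k c.

Lemma cycle_edgeE i j : i < k -> j < k -> e (c i) (c j) =
  [|| j == i.+1, i == j.+1, (i == 0) && (j == k.-1) | (j == 0) && (i == k.-1)].
Proof. by move=> ik jk; rewrite c_cycle.2 // cyc_adjE. Qed.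

Lemma cycle_edge_succ i : i.+1 < k -> e (c i) (c i.+1).
Proof. by move=> ik; rewrite cycle_edgeE ?eqxx // ltnW. Qed.

Lemma cycle_ltE i j : i < k -> j < k -> i != j -> (c i < c j) = (c i <= c j).
Proof.
move=> ik jk ij; rewrite ltn_neqAle andb_idl // => _.
by apply: contra_neq ij => /val_inj; apply: c_cycle.1.
Qed.

Section IncreasingCycle.

Hypothesis c_incr : forall i, i.+1 < k -> c i < c i.+1.

Lemma increasing_cycle_lt i j : i < j < k -> c i < c j.
Proof.
case/andP=> + jk; elim: j jk => // j IH jk; rewrite ltnS leq_eqVlt => /predU1P[->|ij].
  exact: c_incr.
by have := IH (ltnW jk) ij; have := c_incr jk; lia.
Qed.

Lemma increasing_cycle_ltE i j : i < k -> j < k -> (c i < c j) = (i < j).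
Proof.
move=> ik jk; case: (ltngtP i j) => [ij|ji|->]; last exact: ltnn.
  by rewrite increasing_cycle_lt ?ij.
by apply/negbTE; rewrite -leqNgt ltnW // increasing_cycle_lt ?ji.
Qed.

Lemma low_inner_nonadj (u : 'I_n) j : c 0 <= u < c 1 -> 1 < j < k.-1 -> ~~ e u (c j).
Proof.
case/andP; rewrite leq_eqVlt => /predU1P[/val_inj <- _|c0u u1] j_mid.
  by rewrite cycle_edgeE; lia.
apply/negP => euj; have c1j : c 1 < c j by rewrite increasing_cycle_ltE; lia.
have := e_X c0u u1 c1j (@cycle_edge_succ 0 ltac:(lia)) euj.
by rewrite cycle_edgeE; lia.
Qed.

Lemma c1_high_nonadj (v : 'I_n) : c k.-2 < v <= c k.-1 -> ~~ e (c 1) v.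
Proof.
case/andP=> v2; rewrite leq_eqVlt => /predU1P[/val_inj ->|v1].
  by rewrite cycle_edgeE; lia.
apply/negP => e1v; have c12 : c 1 < c k.-2 by rewrite increasing_cycle_ltE; lia.
have e21 : e (c k.-2) (c k.-1) by rewrite cycle_edgeE; lia.
by have := e_X c12 v2 v1 e1v e21; rewrite cycle_edgeE; lia.
Qed.

Lemma low_high_nonadj d (u v : 'I_n) : v - u <= d ->
  c 0 <= u < c 1 -> c k.-2 < v <= c k.-1 -> ~~ e u v.
Proof.
elim: d u v => [|d IH] u v uvd /andP[u0 u1] /andP[v2 v1].
  by have := @increasing_cycle_lt 1 k.-2; lia.
apply/negP => euv; have c12 : c 1 < c k.-2 by rewrite increasing_cycle_ltE; lia.
have [r [ur rv eur erv]] := @e_bar u v ltac:(lia) euv ltac:(simpl; lia).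
have [r1|r1] := ltnP r (c 1).
  exact: negP (IH r v ltac:(lia) ltac:(lia) ltac:(lia)) erv.
have [r2|r2] := leqP r (c k.-2); last first.
  exact: negP (IH u r ltac:(lia) ltac:(lia) ltac:(lia)) eur.
have [j /andP[j1 jk] /andP[jr rj]] :=
  @nat_ivt (fun j => nat_of_ord (c j)) r 1 k.-1 ltac:(lia) ltac:(cbv beta; lia).
move: jr; rewrite leq_eqVlt => /predU1P[/val_inj cjr|jr].
  have [j_1|j_gt1] := eqVneq j 1.
    by move: erv; rewrite -cjr j_1; apply/negP/c1_high_nonadj; lia.
  by move: eur; rewrite -cjr; apply/negP/low_inner_nonadj; lia.
have jk2 : j < k.-2 by rewrite -increasing_cycle_ltE; lia.
have uj : u < c j.
  by case: (eqVneq j 1) => [->//|?]; have := @increasing_cycle_lt 1 j; lia.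
have := e_X uj jr rj eur (@cycle_edge_succ j ltac:(lia)).
by apply/negP/low_inner_nonadj; lia.
Qed.

End IncreasingCycle.

Lemma induced_cycle_not_increasing : ~ (forall i, i.+1 < k -> c i < c i.+1).
Proof.
move=> c_incr; have c01 := @c_incr 0 ltac:(lia).
have c21 : c k.-2 < c k.-1 by rewrite -[k.-1](@prednK k.-1) ?c_incr //; lia.
have /negP[] := @low_high_nonadj c_incr _ (c 0) (c k.-1) (leqnn _) ltac:(lia) ltac:(lia).
by rewrite cycle_edgeE; lia.
Qed.

End InducedCycle.

Section TopVertexFirst.

Variables (k : nat) (c : nat -> 'I_n).
Hypothesis k_ge4 : 4 <= k.
Hypothesis c_cycle : induced_cycle e k c.
Hypothesis c0_max : forall i, i < k -> c i <= c 0.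
Hypothesis c1_lt_last : c 1 < c k.-1.

Lemma cycle_lt_c0 i : 0 < i < k -> c i < c 0.
Proof. by case/andP=> i0 ik; rewrite (cycle_ltE c_cycle) ?c0_max //; lia. Qed.

Lemma cycle_c1_min i : 1 < i < k -> c 1 < c i.
Proof.
case/andP=> i1 ik; rewrite (cycle_ltE c_cycle); [|lia..].
rewrite leqNgt; apply/negP => ci1.
have [j /andP[ij jk] /andP[cj1 c1j]] :=
  @nat_ivt (fun j => nat_of_ord (c j)) (c 1) i k.-1 ltac:(lia) ltac:(cbv beta; lia).
rewrite -(cycle_ltE c_cycle) in cj1; [|lia..].
have e10 : e (c 1) (c 0) by rewrite (cycle_edgeE c_cycle); lia.
have ej : e (c j) (c j.+1) by apply: (cycle_edge_succ c_cycle); lia.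
have := e_X cj1 c1j (@cycle_lt_c0 j.+1 ltac:(lia)) ej e10.
by rewrite (cycle_edgeE c_cycle); lia.
Qed.

Lemma cycle_tail_unstraddled : unstraddled_path e (k - 3) (fun j => c j.+2).
Proof.
have last_idx : (k - 3).+2 = k.-1 by lia.
split=> [j jk|a b am bm /(c_cycle.1 _ _ _ _)|a b ab|a b a_m b_m eab|a b am bm eab] /=.
- by apply: (cycle_edge_succ c_cycle); lia.
- by lia.
- by rewrite (cycle_edgeE c_cycle); lia.
- case/andP=> a2 b2; have b_neq2 : b.+2 != 2 by apply: contraTneq b2 => ->; rewrite ltnn.
  have e12 : e (c 1) (c 2) by apply: (cycle_edge_succ c_cycle); lia.
  have := e_X (@cycle_c1_min a.+2 ltac:(lia)) a2 b2 e12 eab.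
  by rewrite (cycle_edgeE c_cycle); lia.
- rewrite last_idx => /andP[a1 b1].
  have a_neq1 : a.+2 != k.-1 by apply: contraTneq a1 => ->; rewrite ltnn.
  have e10 : e (c k.-1) (c 0) by rewrite (cycle_edgeE c_cycle); lia.
  have := e_X a1 b1 (@cycle_lt_c0 b.+2 ltac:(lia)) eab e10.
  by rewrite (cycle_edgeE c_cycle); lia.
Qed.

Lemma cycle_tail_decreasing i : 1 < i -> i.+1 < k -> c i.+1 < c i.
Proof.
have [tail_incr|tail_decr] := unstraddled_path_monotone cycle_tail_unstraddled; last first.
  by case: i => [|[|i]] // _ ik; apply: tail_decr; lia.
have rot_cycle := induced_cycle_reindex false (ltac:(lia) : 1 < k) c_cycle.
case: (induced_cycle_not_increasing k_ge4 rot_cycle).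
move=> j jk; rewrite /cyc_index !add1n modn_small //.
have [jk2|kj|<-] := ltngtP j.+2 k; [|lia|by rewrite modnn cycle_lt_c0].
rewrite modn_small //; case: j jk jk2 => [|j] jk jk2; first by rewrite cycle_c1_min.
by apply: tail_incr; lia.
Qed.

Lemma top_first_cycle_shape :
  [/\ c 2 < c 0, forall i, 1 < i -> i.+1 < k -> c i.+1 < c i & c 1 < c k.-1].
Proof. by split=> //; [apply: cycle_lt_c0; lia | exact: cycle_tail_decreasing]. Qed.

End TopVertexFirst.

End PersistentGraph.

Theorem proposition4 (n : nat) (e : rel 'I_n) (k : nat) (p : nat -> 'I_n) :
  persistent e -> 4 <= k -> induced_cycle e k p ->
  exists (s : nat) (rev : bool), s < k /\
    let q := fun i => p (cyc_index k s rev i) in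
    [/\ q 2 < q 0,
        (forall i, 2 <= i -> i.+1 < k -> q i.+1 < q i)
      & q 1 < q k.-1].
Proof.
case=> [[e_sym _] [_ [e_X e_bar]]] k_ge4 p_cycle.
have [s sk p_max] : exists2 s, s < k & forall i, i < k -> p i <= p s.
  have [s max_s] :=
    eq_bigmax (fun i : 'I_k => nat_of_ord (p i)) ltac:(rewrite card_ord; lia).
  by exists s => // i ik; rewrite -max_s; exact: (leq_bigmax (Ordinal ik)).
pose q rev i := p (cyc_index k s rev i).
have q_cycle rev : induced_cycle e k (q rev) := induced_cycle_reindex rev sk p_cycle.
have q_top rev i : i < k -> q rev i <= q rev 0.
  by move=> ik; rewrite /q cyc_index0 // p_max // cyc_index_lt //; lia.
have q_shape rev := top_first_cycle_shape e_sym e_X e_bar k_ge4 (q_cycle rev) (q_top rev).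
have flip1 : q true 1 = q false k.-1 by rewrite /q cyc_index_rev ?subn1 //; lia.
have flip2 : q true k.-1 = q false 1.
  by rewrite /q cyc_index_rev; [congr (p (cyc_index _ _ _ _)); lia|lia..].
exists s; have [lt1|gt1] := ltnP (q false 1) (q false k.-1).
  by exists false; split=> //; apply: q_shape.
exists true; split=> //; apply: q_shape; rewrite flip1 flip2.
by rewrite (cycle_ltE (q_cycle false)) //; lia.
Qed.
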